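(* For a monoid $S$, the following are equivalent: (i) $S$ is right artinian; (ii) there exists a generator right $S$-act that is artinian; (iii) every finitely generated right $S$-act is artinian; (iv) every finitely generated right $S$-act is finitely cogenerated.
   Context: $S$ is right artinian if $S_S$ is artinian, i.e. the set of right congruences on $S$ satisfies the descending chain condition. A right $S$-act is artinian if its congruences satisfy the descending chain condition. A generator is an $S$-act $G$ such that $S_S$ is a homomorphic image of $G$ (equivalently, every $S$-act is a homomorphic image of a coproduct of copies of $G$). An $S$-act $A$ is finitely cogenerated if whenever congruences $\rho_i$ ($i\in I$) satisfy $\bigcap_{i\in I}\rho_i=\Delta_A$, already $\bigcap_{j\in J}\rho_j=\Delta_A$ for some finite $J\subseteq I$. *)

From Stdlib Require Import List Arith.

Record monoid := Monoid {
  mcar :> Type;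
  mmul : mcar -> mcar -> mcar;
  mone : mcar;
  mmulA : forall x y z, mmul x (mmul y z) = mmul (mmul x y) z;
  mmul1l : forall x, mmul mone x = x;
  mmul1r : forall x, mmul x mone = x
}.

Record ract (S : monoid) := RAct {
  acar :> Type;
  act : acar -> S -> acar;
  act1 : forall a, act a (mone S) = a;
  actM : forall a s t, act (act a s) t = act a (mmul S s t)
}.
Arguments act {S} _ _ _.

Definition regular_act (S : monoid) : ract S :=
  @RAct S S (mmul S) (mmul1r S) (fun a s t => eq_sym (mmulA S a s t)).

Definition congruence {S : monoid} (A : ract S) (rho : A -> A -> Prop) : Prop :=
  (forall a, rho a a) /\
  (forall a b, rho a b -> rho b a) /\
  (forall a b c, rho a b -> rho b c -> rho a c) /\
  (forall a b s, rho a b -> rho (act A a s) (act A b s)).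

Definition artinian_act {S : monoid} (A : ract S) : Prop :=
  forall rho : nat -> A -> A -> Prop,
    (forall n, congruence A (rho n)) ->
    (forall n a b, rho (Datatypes.S n) a b -> rho n a b) ->
    exists N, forall m, N <= m -> forall a b, rho N a b -> rho m a b.

Definition right_artinian (S : monoid) : Prop := artinian_act (regular_act S).

Definition act_hom {S : monoid} (A B : ract S) (f : A -> B) : Prop :=
  forall a s, f (act A a s) = act B (f a) s.

Definition generator {S : monoid} (G : ract S) : Prop :=
  exists f : G -> regular_act S,
    act_hom G (regular_act S) f /\ (forall y, exists g, f g = y).

Definition finitely_generated {S : monoid} (A : ract S) : Prop :=
  exists X : list A, forall a, exists x s, In x X /\ a = act A x s.

(* Finitely cogenerated: whenever a family of congruences intersects to the
   diagonal, some finite subfamily already does (empty intersection = A x A). *)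
Definition finitely_cogenerated {S : monoid} (A : ract S) : Prop :=
  forall (I : Type) (rho : I -> A -> A -> Prop),
    (forall i, congruence A (rho i)) ->
    (forall a b, (forall i, rho i a b) -> a = b) ->
    exists J : list I, forall a b, (forall j, In j J -> rho j a b) -> a = b.

From Stdlib Require Import List Lia Classical ClassicalEpsilon
  FunctionalExtensionality PropExtensionality ProofIrrelevance.

(* A finitely generated act is an image of
   a finite coproduct of copies of S_S, which gives (i) => (iii); (iii) => (i)
   and (i) <=> (ii) are then immediate.  A choice argument shows that
   artinian acts are finitely cogenerated, giving (iii) => (iv).  For
   (iv) => (i), a descending chain of right congruences on S is pushed to the
   cyclic quotient of S by its intersection; finite cogeneration of that
   quotient forces the chain to stabilize. *)

Lemma descending_le (P : nat -> Prop) :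
  (forall n, P (S n) -> P n) -> forall n m, n <= m -> P m -> P n.
Proof. intros Hd n m Hnm; induction Hnm; auto. Qed.

Section CongruenceFacts.
Context {M : monoid} {A : ract M} {rho : A -> A -> Prop}.
Hypothesis Hrho : congruence A rho.

Lemma cong_refl : forall a, rho a a.
Proof. apply Hrho. Qed.

Lemma cong_sym : forall a b, rho a b -> rho b a.
Proof. apply Hrho. Qed.

Lemma cong_trans : forall a b c, rho a b -> rho b c -> rho a c.
Proof. apply Hrho. Qed.

Lemma cong_act : forall a b s, rho a b -> rho (act A a s) (act A b s).
Proof. apply Hrho. Qed.
End CongruenceFacts.

Lemma congruence_intersection {M : monoid} {A : ract M} {I : Type}
    (P : I -> Prop) (rho : I -> A -> A -> Prop) :
  (forall i, P i -> congruence A (rho i)) ->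
  congruence A (fun a b => forall i, P i -> rho i a b).
Proof.
  intros Hc; repeat split.
  - intros a i Hi; apply (cong_refl (Hc i Hi)).
  - intros a b H i Hi; apply (cong_sym (Hc i Hi)); auto.
  - intros a b c H1 H2 i Hi; apply (cong_trans (Hc i Hi)) with b; auto.
  - intros a b s H i Hi; apply (cong_act (Hc i Hi)); auto.
Qed.

Lemma congruence_pullback {M : monoid} {A B : ract M} (f : B -> A)
    (rho : A -> A -> Prop) :
  act_hom B A f -> congruence A rho -> congruence B (fun x y => rho (f x) (f y)).
Proof.
  intros Hf Hc; repeat split.
  - intros x; apply (cong_refl Hc).
  - intros x y; apply (cong_sym Hc).
  - intros x y z; apply (cong_trans Hc).
  - intros x y s H; rewrite !Hf; apply (cong_act Hc); exact H.
Qed.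

Lemma artinian_pullback_chain {M : monoid} {A B : ract M} (f : B -> A)
    (rho : nat -> A -> A -> Prop) :
  act_hom B A f -> artinian_act B ->
  (forall n, congruence A (rho n)) ->
  (forall n a b, rho (S n) a b -> rho n a b) ->
  exists N, forall m, N <= m -> forall x y, rho N (f x) (f y) -> rho m (f x) (f y).
Proof.
  intros Hf HB Hc Hd; apply HB.
  - intros n; apply congruence_pullback; auto.
  - intros n x y; apply Hd.
Qed.

Lemma artinian_image {M : monoid} {B A : ract M} (f : B -> A) :
  act_hom B A f -> (forall a, exists b, f b = a) -> artinian_act B -> artinian_act A.
Proof.
  intros Hf Hs HB rho Hc Hd.
  destruct (artinian_pullback_chain f rho Hf HB Hc Hd) as [N HN].
  exists N; intros m Hm a b.
  destruct (Hs a) as [x <-], (Hs b) as [y <-]; auto.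
Qed.

Definition subact {M : monoid} (A : ract M) (D : A -> Prop) : Prop :=
  forall a s, D a -> D (act A a s).

Definition rees {M : monoid} {A : ract M} (D : A -> Prop) (a b : A) : Prop :=
  a = b \/ (D a /\ D b).

Lemma rees_congruence {M : monoid} (A : ract M) (D : A -> Prop) :
  subact A D -> congruence A (rees D).
Proof.
  intros HD; repeat split.
  - intros a; now left.
  - intros a b [->|[Ha Hb]]; [now left | now right].
  - intros a b c [->|[Ha Hb]] [->|[Hb' Hc]]; unfold rees; auto.
  - intros a b s [->|[Ha Hb]]; [now left | right; split; apply HD; auto].
Qed.

(* In an artinian act every descending chain of subacts stabilizes: once the
   Rees congruences stabilize, a later subact either keeps all the elements
   or is empty, and an empty subact stays empty. *)
Lemma artinian_subact_dcc {M : monoid} (A : ract M) (D : nat -> A -> Prop) :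
  artinian_act A -> (forall n, subact A (D n)) ->
  (forall n a, D (S n) a -> D n a) ->
  exists N, forall m, N <= m -> forall a, D N a -> D m a.
Proof.
  intros HA Hsub Hd.
  destruct (HA (fun n => rees (D n))) as [N HN].
  - intros n; apply rees_congruence, Hsub.
  - intros n a b [->|[Ha Hb]]; [now left | right; split; apply Hd; auto].
  - destruct (classic (exists K, N <= K /\ forall a, ~ D K a))
      as [[K [_ Hempty]] | Hnonempty].
    + exists K; intros m _ a Ha; destruct (Hempty a Ha).
    + exists N; intros m Hm a Ha.
      assert (Hwit : exists a', D m a').
      { apply NNPP; intros Hno; apply Hnonempty; exists m; split; auto.
        intros a' Ha'; apply Hno; eauto. }
      destruct Hwit as [a' Ha'].
      assert (Ha'N : D N a')
        by (apply (descending_le (fun k => D k a') (fun k => Hd k a') N m); auto).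
      destruct (HN m Hm a a' (or_intror (conj Ha Ha'N))) as [->|[HaM _]]; auto.
Qed.

Definition sum_act_fun {M : monoid} (A B : ract M) (u : A + B) (s : M) : A + B :=
  match u with inl a => inl (act A a s) | inr b => inr (act B b s) end.

Lemma sum_act_fun1 {M : monoid} (A B : ract M) u : sum_act_fun A B u (mone M) = u.
Proof. destruct u; simpl; now rewrite act1. Qed.

Lemma sum_act_funM {M : monoid} (A B : ract M) u s t :
  sum_act_fun A B (sum_act_fun A B u s) t = sum_act_fun A B u (mmul M s t).
Proof. destruct u; simpl; now rewrite actM. Qed.

Definition sum_act {M : monoid} (A B : ract M) : ract M :=
  @RAct M (A + B)%type (sum_act_fun A B) (sum_act_fun1 A B) (sum_act_funM A B).

(* The chain stabilizes on
   each summand; the elements of A related to B form a descending chain of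
   subacts, and once it stabilizes the cross pairs persist as well. *)
Lemma sum_artinian {M : monoid} (A B : ract M) :
  artinian_act A -> artinian_act B -> artinian_act (sum_act A B).
Proof.
  intros HA HB rho Hc Hd.
  assert (Hlow : forall k n u v, k <= n -> rho n u v -> rho k u v)
    by (intros k n u v Hkn; apply (descending_le (fun j => rho j u v)); auto).
  destruct (artinian_pullback_chain (inl : A -> sum_act A B) rho
              (fun _ _ => eq_refl) HA Hc Hd) as [N1 H1].
  destruct (artinian_pullback_chain (inr : B -> sum_act A B) rho
              (fun _ _ => eq_refl) HB Hc Hd) as [N2 H2].
  set (cross := fun n a => exists b, rho n (inl a) (inr b)).
  destruct (artinian_subact_dcc A cross HA) as [N3 H3].
  { intros n a s [b Hb]; exists (act B b s).
    exact (cong_act (Hc n) _ _ s Hb). }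
  { intros n a [b Hb]; exists b; apply Hd; exact Hb. }
  set (N := max N1 (max N2 N3)).
  assert (HN : N1 <= N /\ N2 <= N /\ N3 <= N) by (unfold N; lia).
  exists N; intros m Hm.
  assert (HA' : forall a a', rho N (inl a) (inl a') -> rho m (inl a) (inl a'))
    by (intros a a' H; apply H1; [lia | eapply Hlow; [|exact H]; lia]).
  assert (HB' : forall b b', rho N (inr b) (inr b') -> rho m (inr b) (inr b'))
    by (intros b b' H; apply H2; [lia | eapply Hlow; [|exact H]; lia]).
  assert (Hcross : forall a b, rho N (inl a) (inr b) -> rho m (inl a) (inr b)).
  { intros a b Hab.
    destruct (H3 m ltac:(lia) a) as [b' Hb'].
    { exists b; eapply Hlow; [|exact Hab]; lia. }
    assert (Hbb' : rho N (inr b) (inr b')).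
    { apply (cong_trans (Hc _)) with (inl a); [apply (cong_sym (Hc _)); exact Hab|].
      eapply Hlow; [|exact Hb']; lia. }
    apply (cong_trans (Hc m)) with (inr b'); [exact Hb'|].
    apply (cong_sym (Hc m)), HB'; exact Hbb'. }
  intros [a|b] [a'|b'] H.
  - apply HA'; exact H.
  - apply Hcross; exact H.
  - apply (cong_sym (Hc m)), Hcross, (cong_sym (Hc _)); exact H.
  - apply HB'; exact H.
Qed.

Definition empty_act (M : monoid) : ract M :=
  @RAct M Empty_set (fun e _ => e) (fun e => match e with end)
    (fun e _ _ => match e with end).

Lemma empty_artinian (M : monoid) : artinian_act (empty_act M).
Proof. intros rho _ _; exists 0; intros m _ []. Qed.

Fixpoint free_act (M : monoid) (n : nat) : ract M :=
  match n with
  | 0 => empty_act M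
  | S k => sum_act (regular_act M) (free_act M k)
  end.

Lemma free_artinian (M : monoid) n : right_artinian M -> artinian_act (free_act M n).
Proof.
  intros H; induction n; simpl; [apply empty_artinian | apply sum_artinian; auto].
Qed.

Fixpoint eval_list {M : monoid} (A : ract M) (X : list A) :
    free_act M (length X) -> A :=
  match X as X0 return free_act M (length X0) -> A with
  | nil => fun e => match e with end
  | x :: X' => fun u => match u with inl s => act A x s | inr v => eval_list A X' v end
  end.

Lemma eval_list_hom {M : monoid} (A : ract M) (X : list A) :
  act_hom _ A (eval_list A X).
Proof.
  induction X as [|x X IH]; intros u t.
  - destruct u.
  - destruct u as [s|v]; simpl; [now rewrite actM | apply IH].
Qed.

Lemma eval_list_onto {M : monoid} (A : ract M) (X : list A) x s :
  In x X -> exists u, eval_list A X u = act A x s.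
Proof.
  induction X as [|y X IH]; intros Hin; [destruct Hin|].
  destruct Hin as [->|Hin].
  - exists (inl s : free_act M (length (x :: X))); reflexivity.
  - destruct (IH Hin) as [v Hv].
    exists (inr v : free_act M (length (y :: X))); exact Hv.
Qed.

Lemma fg_artinian (M : monoid) :
  right_artinian M -> forall A : ract M, finitely_generated A -> artinian_act A.
Proof.
  intros H A [X HX].
  apply (artinian_image (eval_list A X) (eval_list_hom A X)).
  - intros a; destruct (HX a) as (x & s & Hin & ->); apply eval_list_onto; exact Hin.
  - apply free_artinian; exact H.
Qed.

Lemma fg_image {M : monoid} {A B : ract M} (f : A -> B) :
  act_hom A B f -> (forall b, exists a, f a = b) ->
  finitely_generated A -> finitely_generated B.
Proof.
  intros Hf Hs [X HX]; exists (map f X); intros b.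
  destruct (Hs b) as [a <-]; destruct (HX a) as (x & s & Hx & ->).
  exists (f x), s; split; [apply in_map; exact Hx | apply Hf].
Qed.

Lemma regular_fg (M : monoid) : finitely_generated (regular_act M).
Proof.
  exists (mone M :: nil); intros a; exists (mone M), a.
  split; [now left | symmetry; apply mmul1l].
Qed.

Lemma regular_generator (M : monoid) : generator (regular_act M).
Proof.
  exists (fun x => x); split; [intros a s; reflexivity | intros y; exists y; reflexivity].
Qed.

(* Otherwise every
   finite intersection of the family can be strictly refined by one more
   member, and choosing such refinements produces a strictly descending chain
   of congruences. *)
Fixpoint refinement_list {I : Type} (next : list I -> I) (n : nat) : list I :=
  match n with
  | 0 => nil
  | S k => next (refinement_list next k) :: refinement_list next k
  end.

Lemma artinian_finitely_cogenerated {M : monoid} (A : ract M) :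
  artinian_act A -> finitely_cogenerated A.
Proof.
  intros HA I rho Hc Hdiag.
  apply NNPP; intros Hno.
  assert (Hrefine : forall J : list I, exists i,
    ~ (forall a b, (forall j, In j J -> rho j a b) -> rho i a b)).
  { intros J; apply not_all_not_ex; intros Hall; apply Hno; exists J.
    intros a b Hab; apply Hdiag; intros i.
    specialize (Hall i); apply NNPP in Hall; auto. }
  destruct (choice _ Hrefine) as [next Hnext].
  set (tau := fun n a b => forall j, In j (refinement_list next n) -> rho j a b).
  destruct (HA tau) as [N HN].
  - intros n; apply congruence_intersection; intros j _; apply Hc.
  - intros n a b H j Hj; apply H; right; exact Hj.
  - apply (Hnext (refinement_list next N)); intros a b H.
    apply (HN (S N) ltac:(lia) a b H); left; reflexivity.
Qed.

Section Quotient.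
Context {M : monoid} (A : ract M) (r : A -> A -> Prop).
Hypothesis Hr : congruence A r.

Definition quot_car : Type := {P : A -> Prop | exists a, P = r a}.

Definition quot_cls (a : A) : quot_car := exist _ (r a) (ex_intro _ a eq_refl).

Lemma quot_ind (P : quot_car -> Prop) : (forall a, P (quot_cls a)) -> forall u, P u.
Proof. intros H [Q [a ->]]; exact (H a). Qed.

Lemma quot_cls_eq a b : r a b -> quot_cls a = quot_cls b.
Proof.
  intros Hab; apply subset_eq_compat, functional_extensionality; intros x.
  apply propositional_extensionality; split; intros H.
  - apply (cong_trans Hr) with a; [apply (cong_sym Hr)|]; assumption.
  - apply (cong_trans Hr) with b; assumption.
Qed.

Lemma quot_cls_inj a b : quot_cls a = quot_cls b -> r a b.
Proof.
  intros E; apply (f_equal (@proj1_sig _ _)) in E; simpl in E.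
  rewrite E; apply (cong_refl Hr).
Qed.

Definition quot_act_pred (P : A -> Prop) (t : M) : A -> Prop :=
  fun x => exists a, P a /\ r (act A a t) x.

Lemma quot_act_pred_cls a t : quot_act_pred (r a) t = r (act A a t).
Proof.
  apply functional_extensionality; intros x; apply propositional_extensionality.
  split.
  - intros [a' [Ha' Hx]]; apply (cong_trans Hr) with (act A a' t); auto.
    apply (cong_act Hr); exact Ha'.
  - intros Hx; exists a; split; [apply (cong_refl Hr) | exact Hx].
Qed.

Lemma quot_act_ok (u : quot_car) t : exists a, quot_act_pred (proj1_sig u) t = r a.
Proof.
  destruct u as [P [a ->]]; exists (act A a t); apply quot_act_pred_cls.
Qed.

Definition quot_act (u : quot_car) (t : M) : quot_car :=
  exist _ (quot_act_pred (proj1_sig u) t) (quot_act_ok u t).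

Lemma quot_act_cls a t : quot_act (quot_cls a) t = quot_cls (act A a t).
Proof. apply subset_eq_compat, quot_act_pred_cls. Qed.

Lemma quot_act1 u : quot_act u (mone M) = u.
Proof. apply quot_ind with (u := u); intros a; now rewrite quot_act_cls, act1. Qed.

Lemma quot_actM u s t : quot_act (quot_act u s) t = quot_act u (mmul M s t).
Proof. apply quot_ind with (u := u); intros a; now rewrite !quot_act_cls, actM. Qed.

Definition quotient_act : ract M := @RAct M quot_car quot_act quot_act1 quot_actM.

Lemma quot_cls_hom : act_hom A quotient_act quot_cls.
Proof. intros a s; symmetry; apply quot_act_cls. Qed.

Lemma quot_cls_onto : forall u : quotient_act, exists a, quot_cls a = u.
Proof. apply quot_ind; intros a; exists a; reflexivity. Qed.

Definition quot_rel (sigma : A -> A -> Prop) (u v : quot_car) : Prop :=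
  forall a b, u = quot_cls a -> v = quot_cls b -> sigma a b.

Section InducedCongruence.
Variable sigma : A -> A -> Prop.
Hypothesis Hsigma : congruence A sigma.
Hypothesis Hrsigma : forall a b, r a b -> sigma a b.

Lemma quot_rel_cls a b : quot_rel sigma (quot_cls a) (quot_cls b) <-> sigma a b.
Proof.
  split; [intros H; apply H; reflexivity|].
  intros Hab a' b' Ea Eb.
  apply quot_cls_inj, Hrsigma in Ea; apply quot_cls_inj, Hrsigma in Eb.
  apply (cong_trans Hsigma) with a; [apply (cong_sym Hsigma); exact Ea|].
  apply (cong_trans Hsigma) with b; assumption.
Qed.

Lemma quot_rel_congruence : congruence quotient_act (quot_rel sigma).
Proof.
  repeat split.
  - apply quot_ind; intros a; apply quot_rel_cls, (cong_refl Hsigma).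
  - intros u v; pattern u; apply quot_ind; intros a; pattern v; apply quot_ind;
      intros b; rewrite !quot_rel_cls; apply (cong_sym Hsigma).
  - intros u v w; pattern u; apply quot_ind; intros a; pattern v; apply quot_ind;
      intros b; pattern w; apply quot_ind; intros c; rewrite !quot_rel_cls;
      apply (cong_trans Hsigma).
  - intros u v s; pattern u; apply quot_ind; intros a; pattern v; apply quot_ind;
      intros b; rewrite <- !quot_cls_hom, !quot_rel_cls; apply (cong_act Hsigma).
Qed.
End InducedCongruence.
End Quotient.

(* A descending chain of congruences stabilizes as soon as the quotient by
   its intersection r is finitely cogenerated: the induced congruences on A/r
   intersect to the diagonal, so finitely many of them already do, and from
   the largest of their indices on the chain equals r. *)
Lemma chain_stabilizes_of_fcog_quotient {M : monoid} (A : ract M)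
    (rho : nat -> A -> A -> Prop) (r : A -> A -> Prop) (Hr : congruence A r) :
  (forall n, congruence A (rho n)) ->
  (forall n a b, rho (S n) a b -> rho n a b) ->
  (forall a b, r a b <-> forall n, rho n a b) ->
  finitely_cogenerated (quotient_act A r Hr) ->
  exists N, forall m, N <= m -> forall a b, rho N a b -> rho m a b.
Proof.
  intros Hc Hd Hint Hfcog.
  assert (Hrrho : forall n a b, r a b -> rho n a b) by (intros n a b H; apply Hint, H).
  destruct (Hfcog nat (fun n => quot_rel A r (rho n))) as [J HJ].
  - intros n; apply quot_rel_congruence; auto.
  - intros u v; pattern u; apply quot_ind; intros a; pattern v; apply quot_ind;
      intros b H.
    apply quot_cls_eq; [exact Hr|]; apply Hint; intros n.
    apply (quot_rel_cls A r Hr (rho n)); auto.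
  - exists (list_max J); intros m Hm a b Hab.
    assert (Hcls : quot_cls A r a = quot_cls A r b).
    { apply HJ; intros j Hj; apply quot_rel_cls; auto.
      assert (Hjle : j <= list_max J).
      { pose proof (proj1 (list_max_le J (list_max J)) (le_n _)) as Hall.
        rewrite Forall_forall in Hall; auto. }
      apply (descending_le (fun k => rho k a b) (fun k => Hd k a b) j (list_max J));
        auto. }
    apply Hint, (quot_cls_inj A r Hr); exact Hcls.
Qed.

(* (iv) => (i): apply the previous lemma to S_S, whose quotients are cyclic,
   hence finitely generated. *)
Lemma fcog_right_artinian (M : monoid) :
  (forall A : ract M, finitely_generated A -> finitely_cogenerated A) ->
  right_artinian M.
Proof.
  intros H rho Hc Hd.
  pose proof (congruence_intersection (fun _ : nat => True) rho (fun n _ => Hc n))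
    as Hr.
  apply (chain_stabilizes_of_fcog_quotient _ rho _ Hr Hc Hd).
  - intros a b; split; auto.
  - apply H, (fg_image _ (quot_cls_hom _ _ Hr) (quot_cls_onto _ _ Hr)), regular_fg.
Qed.

Theorem mainTheorem12 (S : monoid) :
  (right_artinian S <-> exists G : ract S, generator G /\ artinian_act G) /\
  (right_artinian S <-> forall A : ract S, finitely_generated A -> artinian_act A) /\
  (right_artinian S <-> forall A : ract S, finitely_generated A -> finitely_cogenerated A).
Proof.
  split; [|split].
  - split.
    + intros H; exists (regular_act S); split; [apply regular_generator | exact H].
    + intros (G & (f & Hf & Hs) & HG); exact (artinian_image f Hf Hs HG).
  - split; [apply fg_artinian |].
    intros H; apply H, regular_fg.
  - split; [|apply fcog_right_artinian].
    intros H A HA; apply artinian_finitely_cogenerated, fg_artinian; assumption.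
Qed.
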